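(* Let $X=(X_1,\dots,X_d)$ be a random vector in $\mathbb{R}^d$ with finite support $\mathcal{X}:=\{x\in\mathbb{R}^d : \mathbb{P}(X=x)>0\}$, and assume there exist non-empty subsets $\mathcal{X}_1,\dots,\mathcal{X}_d\subset\mathbb{R}$ such that $\mathcal{X}=\mathcal{X}_1\times\cdots\times\mathcal{X}_d$. Then there exist measures $\nu_1,\dots,\nu_d$ on $(\mathbb{R},\mathcal{B}(\mathbb{R}))$ such that the law $\mathbf{P}_X$ of $X$ is absolutely continuous with respect to $\nu:=\nu_1\otimes\cdots\otimes\nu_d$, and, denoting by $f$ the density of $X$ with respect to $\nu$ and, for every $A\subseteq\{1,\dots,d\}$, by $f_A$ the density of $X_A:=(X_i)_{i\in A}$ with respect to $\nu_A:=\bigotimes_{i\in A}\nu_i$, there exists $M\in(0,1]$ such that for every $A\subseteq\{1,\dots,d\}$ one has $f(x)\ge M\, f_A(x_A)\, f_{A^c}(x_{A^c})$ for $\nu$-almost every $x$.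
   Context: $\mathcal{B}(\mathbb{R})$ is the Borel $\sigma$-algebra; $A^c=\{1,\dots,d\}\setminus A$. For $A=\emptyset$ the density $f_\emptyset$ is taken to be the constant $1$. *)

From HB Require Import structures.
From mathcomp Require Import all_boot all_order all_algebra.
From mathcomp Require Import all_classical all_reals all_analysis.
Set Implicit Arguments.
Unset Strict Implicit.
Unset Printing Implicit Defensive.
Import Order.TTheory GRing.Theory Num.Theory.
Local Open Scope classical_set_scope.
Local Open Scope ring_scope.

(* R^n is represented by n.-tuple R, equipped by mathcomp-analysis with the
   product sigma-algebra (generated by the coordinate maps); R carries its
   Borel sigma-algebra. *)

Definition law d0 d (Omega : measurableType d0) (T : measurableType d)
  (R : realType) (P : probability Omega R) (X : Omega -> T) : set T -> \bar R :=
  fun B => P (X @^-1` B).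

Definition atoms d0 d (Omega : measurableType d0) (T : measurableType d)
  (R : realType) (P : probability Omega R) (X : Omega -> T) : set T :=
  [set x | (0 < P (X @^-1` [set x]))%E].

Definition is_product_measure (R : realType) (n : nat)
  (nus : 'I_n -> {measure set R -> \bar R})
  (nu : {measure set (n.-tuple R) -> \bar R}) : Prop :=
  forall B : 'I_n -> set R, (forall i, measurable (B i)) ->
    nu [set x | forall i, B i (tnth x i)] = (\prod_(i < n) nus i (B i))%E.

Definition abs_continuous d (T : measurableType d) (R : realType)
  (mu : set T -> \bar R) (nu : {measure set T -> \bar R}) : Prop :=
  forall B, measurable B -> nu B = 0%E -> mu B = 0%E.

Definition is_density d (T : measurableType d) (R : realType)
  (mu : set T -> \bar R) (nu : {measure set T -> \bar R}) (f : T -> R) : Prop :=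
  [/\ measurable_fun setT f, (forall x, 0 <= f x) &
      forall B, measurable B -> mu B = (\int[nu]_(x in B) (f x)%:E)%E].

(* x_A := (x_i)_{i in A}, coordinates listed in increasing order of i. *)
Definition coord_proj (R : realType) (n : nat) (A : {set 'I_n}) (x : n.-tuple R)
  : #|A|.-tuple R :=
  [tuple tnth x (enum_val k) | k < #|A|].

From HB Require Import structures.
From mathcomp Require Import all_boot all_order all_algebra.
From mathcomp Require Import all_classical all_reals all_analysis.
Set Implicit Arguments.
Unset Strict Implicit.
Unset Printing Implicit Defensive.
Import Order.TTheory GRing.Theory Num.Theory.
Local Open Scope classical_set_scope.
Local Open Scope ring_scope.

(* Take for nu_i the counting measure on the finite set X_i.  Then nu is the
   counting measure on the support X_1 x ... x X_d and vanishes off it, so each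
   density is the probability mass function of the corresponding vector on the
   support.  There f(x) = P(X = x) >= M := min_x P(X = x) > 0, while f_A and
   f_(A^c) are at most 1. *)

Definition tuple_box (T : Type) (n : nat) (B : 'I_n -> set T) : set (n.-tuple T) :=
  [set x | forall i, B i (tnth x i)].

Lemma finite_tuple_box_factor (T : Type) (n : nat) (B : 'I_n -> set T) i :
  (forall j, B j !=set0) -> finite_set (tuple_box B) -> finite_set (B i).
Proof.
move=> Bne finB; have [b Bb] : exists b : 'I_n -> T, forall j, B j (b j).
  by apply: fin_all_exists => j; have [t Bt] := Bne j; exists t.
apply: sub_finite_set (finite_image (fun x => tnth x i) finB) => t Bit.
exists [tuple if j == i then t else b j | j < n]; last by rewrite tnth_mktuple eqxx.
by move=> j; rewrite tnth_mktuple; case: eqP => [->|].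
Qed.

Section tuple_box_measurable.
Variables (R : realType) (n : nat).

Lemma measurable_tuple_box (B : 'I_n -> set R) :
  (forall i, measurable (B i)) -> measurable (tuple_box B).
Proof.
move=> mB; have -> : tuple_box B = \bigcap_(i in [set: 'I_n]) ((fun x => tnth x i) @^-1` B i).
  by apply/seteqP; split => x /= Bx i => [_|]; apply: Bx.
apply: fin_bigcap_measurable; first exact: finite_finset.
move=> i _; rewrite -[X in measurable X]setTI.
exact: measurable_tnth.
Qed.

Lemma set1_tuple_box (a : n.-tuple R) : [set a] = tuple_box (fun i => [set tnth a i]).
Proof.
apply/seteqP; split => x /=; first by move=> -> i.
by move=> ax; apply: eq_from_tnth => i; apply: ax.
Qed.

Lemma measurable_tuple_set1 (a : n.-tuple R) : measurable [set a].
Proof. by rewrite set1_tuple_box; apply: measurable_tuple_box. Qed.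

End tuple_box_measurable.

Lemma measurable_coord_proj (R : realType) (n : nat) (A : {set 'I_n}) :
  measurable_fun setT (@coord_proj R n A).
Proof.
apply/measurable_fun_tnthP => k.
have -> : (fun x => tnth x k) \o @coord_proj R n A = (fun x => tnth x (enum_val k)).
  by apply: funext => x /=; rewrite tnth_mktuple.
exact: measurable_tnth.
Qed.

Section product_measure.
Variables (R : realType) (n : nat) (nus : 'I_n -> {measure set R -> \bar R}).
Variables (nu : {measure set (n.-tuple R) -> \bar R}).
Hypothesis nuP : is_product_measure nus nu.

Lemma product_measure_set1 (a : n.-tuple R) :
  (forall i, nus i [set tnth a i] = 1%E) -> nu [set a] = 1%E.
Proof.
move=> nus1; rewrite set1_tuple_box nuP; last by move=> i; exact: measurable_set1.
by rewrite big1.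
Qed.

Lemma product_measure_compl_box (B : 'I_n -> set R) :
  (forall i, measurable (B i)) -> (forall i, nus i (B i) = nus i setT) ->
  (forall i, nus i (B i) \is a fin_num) -> nu (~` tuple_box B) = 0%E.
Proof.
move=> mB fullB finB.
have mbox := measurable_tuple_box mB.
have nu_box : nu (tuple_box B) = (\prod_(i < n) nus i (B i))%E by exact: nuP.
have nuT : nu setT = nu (tuple_box B).
  have -> : [set: n.-tuple R] = tuple_box (fun=> [set: R]) by apply/seteqP; split.
  by rewrite nuP // nu_box; apply: eq_bigr => i _; rewrite fullB.
have nu_box_fin : nu (tuple_box B) \is a fin_num by rewrite nu_box prode_fin_num.
have nuT_fin : nu setT \is a fin_num by rewrite nuT.
rewrite -setTD measureD //; last by case/andP: (fin_numPlt _ nuT_fin).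
by rewrite setTI -(subee nu_box_fin); congr (_ - _)%E.
Qed.

End product_measure.

Lemma finite_set_measurable (R : realType) (S : set R) : finite_set S -> measurable S.
Proof. by move=> finS; exact: countable_measurable (finite_set_countable finS). Qed.

Section counting_restriction.
Variables (R : realType) (S : set R) (mS : measurable S).
Hypothesis finS : finite_set S.

Let counting_S := mrestr (@counting R R) mS.

Lemma mrestr_counting_set1 r : S r -> counting_S [set r] = 1%E.
Proof.
move=> Sr; rewrite /counting_S /mrestr setIidl; last by move=> x ->.
by rewrite /counting asboolT ?finite_set1 // fset_set1 finmap.cardfs1.
Qed.

Lemma mrestr_counting_fin_num A : counting_S A \is a fin_num.
Proof.
rewrite /counting_S /mrestr /counting asboolT //.
exact: sub_finite_set (@subIsetr _ _ _) finS.
Qed.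

Lemma mrestr_counting_sigma_finite : sigma_finite setT counting_S.
Proof.
apply: fin_num_fun_sigma_finite; first by rewrite ltey_eq mrestr_counting_fin_num.
by move=> A _; exact: mrestr_counting_fin_num.
Qed.

End counting_restriction.

Lemma density_at_unit_atom d (T : measurableType d) (R : realType)
  (mu : set T -> \bar R) (nu : {measure set T -> \bar R}) (f : T -> R) (a : T) :
  is_density mu nu f -> measurable [set a] -> nu [set a] = 1%E ->
  (f a)%:E = mu [set a].
Proof.
case=> _ _ muE ma nua; rewrite muE //.
rewrite (eq_integral (cst (f a)%:E)); last by move=> x; rewrite inE => ->.
by rewrite integral_cst // nua mule1.
Qed.

Lemma finite_set_lower_bound (R : realType) (T : eqType) (A : set T) (g : T -> R) :
  finite_set A -> (forall x, A x -> 0 < g x) ->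
  exists M : R, 0 < M <= 1 /\ forall x, A x -> M <= g x.
Proof.
move=> /finite_seqP[s ->] gA; exists (\big[Order.min/1]_(x <- s) g x); split.
  rewrite bigmin_le_id andbT big_seq; apply: (big_ind (fun y => 0 < y)) => //.
  by move=> y z y0 z0; rewrite lt_min y0.
by move=> x xs; exact: ge_bigmin_seq.
Qed.

Section law_atoms.
Variables (d0 d : measure_display) (Omega : measurableType d0) (T : measurableType d).
Variables (R : realType) (P : probability Omega R) (X : Omega -> T).
Hypothesis mX : measurable_fun setT X.

Let measurable_preimage S : measurable S -> measurable (X @^-1` S).
Proof. by move=> mS; rewrite -[X in measurable X]setTI; exact: mX. Qed.

Lemma law_abs_continuous (nu : {measure set T -> \bar R}) (S : set T) :
  measurable S -> P (X @^-1` S) = 1%E ->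
  (forall a, S a -> measurable [set a] /\ nu [set a] = 1%E) ->
  abs_continuous (law P X) nu.
Proof.
move=> mS PS nu1 B mB nuB0; apply/eqP; rewrite eq_le measure_ge0 andbT.
have PSc : P (X @^-1` ~` S) = 0%E.
  by rewrite preimage_setC probability_setC ?PS ?subee //; exact: measurable_preimage.
rewrite -PSc; apply: le_measure; rewrite ?inE.
- exact: measurable_preimage.
- exact/measurable_preimage/measurableC.
move=> w /= XBw XSw; have [ma nua] := nu1 _ XSw.
have : (nu [set X w] <= nu B)%E by apply: le_measure; rewrite ?inE // => y ->.
by rewrite nua nuB0 lee_fin ler10.
Qed.

Lemma density_le1_at_unit_atom (nu : {measure set T -> \bar R}) f (a : T) :
  is_density (law P X) nu f -> measurable [set a] -> nu [set a] = 1%E -> f a <= 1.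
Proof.
move=> fP ma nua; rewrite -lee_fin (density_at_unit_atom fP ma nua).
exact/probability_le1/measurable_preimage.
Qed.

Lemma density_atoms_lower_bound (nu : {measure set T -> \bar R}) :
  finite_set (atoms P X) ->
  (forall a, atoms P X a -> measurable [set a] /\ nu [set a] = 1%E) ->
  exists M : R, 0 < M <= 1 /\ forall f, is_density (law P X) nu f ->
    forall x, atoms P X x -> M <= f x.
Proof.
move=> finA nu1.
have pmf_fin x : atoms P X x -> P (X @^-1` [set x]) \is a fin_num.
  by move=> Ax; have [mx _] := nu1 x Ax; exact/fin_num_measure/measurable_preimage.
have pmf_gt0 x : atoms P X x -> 0 < fine (P (X @^-1` [set x])).
  by move=> Ax; rewrite -lte_fin fineK ?pmf_fin.
have [M [M01 MA]] := finite_set_lower_bound finA pmf_gt0.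
exists M; split => // f fP x Ax; have [mx nux] := nu1 x Ax.
by rewrite -lee_fin (density_at_unit_atom fP mx nux) /law -(fineK (pmf_fin x Ax)) lee_fin MA.
Qed.

End law_atoms.

Theorem corollary1 (R : realType) (d : nat) (d0 : measure_display)
  (Omega : measurableType d0) (P : probability Omega R)
  (X : Omega -> d.-tuple R) (mX : measurable_fun setT X) :
  finite_set (atoms P X) ->
  P (X @^-1` atoms P X) = 1%E ->
  (exists Xs : 'I_d -> set R, (forall i, Xs i !=set0) /\
     atoms P X = [set x | forall i, Xs i (tnth x i)]) ->
  exists nus : 'I_d -> {measure set R -> \bar R},
    (forall i, sigma_finite setT (nus i)) /\
    forall nu : {measure set (d.-tuple R) -> \bar R},
      is_product_measure nus nu ->
      abs_continuous (law P X) nu /\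
      exists M : R, 0 < M <= 1 /\
        forall nuA : forall A : {set 'I_d}, {measure set (#|A|.-tuple R) -> \bar R},
          (forall A, is_product_measure (fun k => nus (enum_val k)) (nuA A)) ->
        forall f : d.-tuple R -> R, is_density (law P X) nu f ->
        forall fA : forall A : {set 'I_d}, #|A|.-tuple R -> R,
          (forall A, is_density (law P (fun w => coord_proj A (X w))) (nuA A) (fA A)) ->
        forall A : {set 'I_d},
          {ae nu, forall x, M * fA A (coord_proj A x) * fA (~: A) (coord_proj (~: A) x) <= f x}.
Proof.
move=> finA PA1 [Xs [Xs_ne atomsE]].
have Xs_fin i : finite_set (Xs i).
  by apply: finite_tuple_box_factor Xs_ne _; rewrite atomsE in finA.
have mXs i := finite_set_measurable (Xs_fin i).
exists (fun i => mrestr (@counting R R) (mXs i)).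
split => [i|nu nuP]; first exact: mrestr_counting_sigma_finite.
have nus_atom (a : d.-tuple R) : atoms P X a ->
    forall i, mrestr (@counting R R) (mXs i) [set tnth a i] = 1%E.
  by rewrite atomsE => Aa i; exact: mrestr_counting_set1.
have nu_atom a : atoms P X a -> measurable [set a] /\ nu [set a] = 1%E.
  move=> Aa; split; first exact: measurable_tuple_set1.
  exact: product_measure_set1 (nus_atom _ Aa).
have matoms : measurable (atoms P X) by rewrite atomsE; exact: measurable_tuple_box.
split; first exact: law_abs_continuous matoms PA1 nu_atom.
have [M [/andP[M_gt0 M_le1] Mf]] := density_atoms_lower_bound mX finA nu_atom.
exists M; split => [|nuA nuAP f fP fA fAP A]; first by rewrite M_gt0.
have fA_le1 B x : atoms P X x -> fA B (coord_proj B x) <= 1.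
  have mXB := measurableT_comp (@measurable_coord_proj R d B) mX.
  move=> Ax; apply: (density_le1_at_unit_atom mXB (fAP B)); first exact: measurable_tuple_set1.
  by apply: (product_measure_set1 (nuAP B)) => k; rewrite tnth_mktuple; exact: nus_atom.
have fA_ge0 B y : 0 <= fA B y by have [_ ? _] := fAP B.
exists (~` atoms P X); split; first exact: measurableC.
  rewrite atomsE; apply: (product_measure_compl_box nuP) => // i.
  - by rewrite /= /mrestr setIid setTI.
  - exact: mrestr_counting_fin_num.
apply: subsetC => x Ax /=; rewrite -mulrA; apply: le_trans (Mf f fP x Ax).
apply: ler_piMr; first exact: ltW.
by apply: mulr_ile1; rewrite ?fA_le1.
Qed.
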